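(* Let $X$ be a compact Hausdorff space and $f:\mathbb N\to X$ a map with finite range. For $m\ge1$ let $R_m(f)=\{(f(lm),f(lm+1),\ldots,f(lm+m-1)):l\in\mathbb N\}$. Then the limit $\lim_{m\to\infty}\frac{\log|R_m(f)|}{m}$ exists and equals the anqie entropy of $f$.
   Context: $\mathbb N=\{0,1,2,\ldots\}$. For a compact Hausdorff space $X$ and a map $f:\mathbb N\to X$, let $X_f$ be the closure in $X^{\mathbb N}$ (product topology) of $\{(f(n),f(n+1),f(n+2),\ldots):n\in\mathbb N\}$, and let $B_f$ be the shift $(\omega_0,\omega_1,\ldots)\mapsto(\omega_1,\omega_2,\ldots)$ restricted to $X_f$. The anqie entropy of $f$ is the topological entropy $h(B_f)$. $|C|$ is the cardinality of a finite set $C$. *)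

From Stdlib Require Import Reals List Arith.
Import ListNotations.
Open Scope R_scope.

Record topology (X : Type) := {
  is_open : (X -> Prop) -> Prop;
  open_full : is_open (fun _ => True);
  open_inter : forall U V, is_open U -> is_open V -> is_open (fun x => U x /\ V x);
  open_union : forall F : (X -> Prop) -> Prop,
      (forall U, F U -> is_open U) -> is_open (fun x => exists U, F U /\ U x)
}.
Arguments is_open {X} t U.

Definition hausdorff {X : Type} (t : topology X) : Prop :=
  forall x y : X, x <> y -> exists U V, is_open t U /\ is_open t V /\ U x /\ V y /\
     forall z, ~ (U z /\ V z).

Definition compact_sp {X : Type} (t : topology X) : Prop :=
  forall F : (X -> Prop) -> Prop, (forall U, F U -> is_open t U) ->
    (forall x, exists U, F U /\ U x) ->
    exists L : list (X -> Prop), (forall U, In U L -> F U) /\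
      forall x, exists U, In U L /\ U x.

(** Open sets of the product topology on X^N (sequences nat -> X):
    unions of cylinders  {v | v i \in U_i for i < n}, U_i open. *)
Definition prod_open {X : Type} (t : topology X) (W : (nat -> X) -> Prop) : Prop :=
  forall w, W w -> exists (n : nat) (Us : nat -> X -> Prop),
    (forall i, (i < n)%nat -> is_open t (Us i)) /\
    (forall i, (i < n)%nat -> Us i (w i)) /\
    (forall v, (forall i, (i < n)%nat -> Us i (v i)) -> W v).

Definition shift {X : Type} (w : nat -> X) : nat -> X := fun k => w (S k).

(** X_f : closure in X^N of {(f n, f (n+1), ...) : n in N}. *)
Definition Xf {X : Type} (t : topology X) (f : nat -> X) (w : nat -> X) : Prop :=
  forall W, prod_open t W -> W w -> exists n : nat, W (fun k => f (n + k)%nat).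

(** Topological entropy (Adler–Konheim–McAndrew) of a map T restricted to
    an invariant compact set K of a space Y with open sets O. *)
Definition open_cover {Y : Type} (O : (Y -> Prop) -> Prop) (K : Y -> Prop)
  (C : (Y -> Prop) -> Prop) : Prop :=
  (forall U, C U -> O U) /\ (forall y, K y -> exists U, C U /\ U y).

(** Members of C v T^{-1}C v ... v T^{-(n-1)}C. *)
Definition join_n {Y : Type} (C : (Y -> Prop) -> Prop) (T : Y -> Y) (n : nat)
  (V : Y -> Prop) : Prop :=
  exists Us : nat -> Y -> Prop, (forall i, (i < n)%nat -> C (Us i)) /\
    forall y, V y <-> (forall i, (i < n)%nat -> Us i (Nat.iter i T y)).

Definition min_subcover_card {Y : Type} (K : Y -> Prop) (D : (Y -> Prop) -> Prop)
  (m : nat) : Prop :=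
  (exists L : list (Y -> Prop), length L = m /\ (forall V, In V L -> D V) /\
      forall y, K y -> exists V, In V L /\ V y) /\
  (forall L : list (Y -> Prop), (forall V, In V L -> D V) ->
      (forall y, K y -> exists V, In V L /\ V y) -> (m <= length L)%nat).

Definition cover_entropy {Y : Type} (K : Y -> Prop) (T : Y -> Y)
  (C : (Y -> Prop) -> Prop) (x : R) : Prop :=
  exists N : nat -> nat, (forall n, min_subcover_card K (join_n C T n) (N n)) /\
    Un_cv (fun n => ln (INR (N (S n))) / INR (S n)) x.

Definition top_entropy {Y : Type} (O : (Y -> Prop) -> Prop) (K : Y -> Prop)
  (T : Y -> Y) (h : R) : Prop :=
  is_lub (fun x => exists C, open_cover O K C /\ cover_entropy K T C x) h.

Definition anqie_entropy {X : Type} (t : topology X) (f : nat -> X) (h : R) : Prop :=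
  top_entropy (prod_open t) (Xf t f) shift h.

Definition Rm {X : Type} (f : nat -> X) (m : nat) (s : list X) : Prop :=
  exists l : nat, s = map (fun i => f (l * m + i)%nat) (seq 0 m).

Definition card_is {A : Type} (P : A -> Prop) (k : nat) : Prop :=
  exists L : list A, NoDup L /\ length L = k /\ forall a, P a <-> In a L.

From Stdlib Require Import Reals List Arith Lia Lra.
From Stdlib Require Import Classical ClassicalEpsilon.
Import ListNotations.

(* Since f takes finitely many values and X is Hausdorff, every value of f has an open
   neighbourhood containing no other value; hence X_f is the subshift of all sequences whose
   finite blocks are words of f. Let l(n) be the number of words of length n of f. The cover of
   X_f by the cylinders {v | v 0 = a} has exactly l(n) members in its n-th join, and by Koenig's
   lemma every open cover of X_f is refined by the cylinders of some fixed length K, so its n-th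
   join needs at most l(n + K) members. Hence h(B_f) = lim log l(n) / n.
   Every word of length n is read inside n/m + 2 consecutive aligned blocks of length m, so
   l(n) <= m |R_m(f)|^(n/m + 2), while |R_m(f)| <= l(m); therefore log |R_m(f)| / m and
   log l(n) / n both converge to inf_m log |R_m(f)| / m. *)

Lemma ln_le_compat x y : 0 < x -> x <= y -> ln x <= ln y.
Proof. intros Hx [Hxy | <-]; [apply Rlt_le, ln_increasing; auto | apply Rle_refl]. Qed.

Lemma ln_INR_ge0 (a : nat) : (1 <= a)%nat -> 0 <= ln (INR a).
Proof. intros Ha. rewrite <- ln_1. apply ln_le_compat; [lra|]. now apply (le_INR 1). Qed.

Lemma div_le_add_div (y c D t : R) : 0 < t -> y <= t * c + D -> y / t <= c + D / t.
Proof.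
  intros Ht H. apply (Rmult_le_reg_r t); auto. unfold Rdiv.
  rewrite Rmult_plus_distr_r, !Rmult_assoc, Rinv_l, !Rmult_1_r by lra. lra.
Qed.

Lemma Un_cv_const (c : R) : Un_cv (fun _ => c) c.
Proof. intros e He. exists O. intros n _. unfold R_dist. rewrite Rminus_diag, Rabs_R0. exact He. Qed.

Lemma Un_cv_div_INR_S (D : R) : Un_cv (fun n => D / INR (S n)) 0.
Proof.
  rewrite <- (Rmult_0_r D). apply CV_mult; [apply Un_cv_const|].
  apply cv_infty_cv_0. intros M. destruct (INR_unbounded M) as [N HN]. exists N. intros n Hn.
  apply le_INR in Hn. rewrite S_INR. lra.
Qed.

Lemma Un_cv_shift_rescale (g : nat -> R) h K :
  Un_cv (fun n => g (S n) / INR (S n)) h -> Un_cv (fun n => g (S n + K)%nat / INR (S n)) h.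
Proof.
  intros Hg. replace h with (h * (1 + 0)) by ring.
  apply (Un_cv_ext (fun n => g (S (n + K)) / INR (S (n + K)) * (1 + INR K / INR (S n)))).
  - intros n. assert (0 < INR (S n)) by (apply lt_0_INR; lia).
    change (S n + K)%nat with (S (n + K)).
    replace (INR (S (n + K))) with (INR (S n) + INR K) by (rewrite <- plus_INR; reflexivity).
    pose proof (pos_INR K). field. split; apply Rgt_not_eq; lra.
  - apply CV_mult; [exact (CV_shift' _ K h Hg)|].
    apply CV_plus; [apply Un_cv_const | apply Un_cv_div_INR_S].
Qed.

Lemma cv_inf_of_upper_bounds (a c : nat -> R) :
  (forall m, 0 <= c m) -> (forall n, c n <= a n) ->
  (forall m, exists D, forall n, a n <= c m + D / INR (S n)) ->
  exists h, Un_cv a h /\ Un_cv c h.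
Proof.
  intros c_ge0 c_le_a a_le.
  destruct (completeness (fun x => exists m, x = - c m)) as [s [s_ub s_least]].
  { exists 0. intros x [m ->]. specialize (c_ge0 m). lra. }
  { exists (- c 0%nat), 0%nat. reflexivity. }
  assert (inf_le : forall m, - s <= c m).
  { intro m. enough (- c m <= s) by lra. apply s_ub. now exists m. }
  assert (inf_approx : forall e, 0 < e -> exists m, c m < - s + e).
  { intros e He. apply NNPP. intros Hno. enough (s <= - (- s + e)) by lra.
    apply s_least. intros x [m ->]. apply Ropp_le_contravar, Rnot_lt_le. intro. apply Hno. now exists m. }
  assert (a_cv : Un_cv a (- s)).
  { intros e He. destruct (inf_approx (e / 2)) as [m Hm]; [lra|]. destruct (a_le m) as [D HD].
    destruct (Un_cv_div_INR_S D (e / 2)) as [N HN]; [lra|]. exists N. intros n Hn.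
    specialize (HN n Hn). specialize (HD n). specialize (inf_le n). specialize (c_le_a n).
    unfold R_dist in *. rewrite Rminus_0_r in HN. apply Rabs_def2 in HN. apply Rabs_def1; lra. }
  exists (- s). split; auto.
  intros e He. destruct (a_cv e He) as [N HN]. exists N. intros n Hn. specialize (HN n Hn).
  unfold R_dist in *. apply Rabs_def2 in HN. specialize (inf_le n). specialize (c_le_a n).
  apply Rabs_def1; lra.
Qed.

Lemma ln_block_bound (a b M n : nat) : (1 <= a)%nat -> (1 <= b)%nat -> (1 <= M)%nat ->
  (a <= M * b ^ (n / M + 2))%nat ->
  ln (INR a) <= INR n * (ln (INR b) / INR M) + (ln (INR M) + 2 * ln (INR b)).
Proof.
  intros Ha Hb HM Hab.
  assert (HMpos : 0 < INR M) by (apply lt_0_INR; lia).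
  assert (Hbpos : 0 < INR b) by (apply lt_0_INR; lia).
  assert (Hlnb : 0 <= ln (INR b)) by (apply ln_INR_ge0; auto).
  assert (Hq : INR (n / M) * INR M <= INR n).
  { rewrite <- mult_INR. apply le_INR. rewrite Nat.mul_comm. apply Nat.Div0.mul_div_le. }
  eapply Rle_trans; [apply ln_le_compat; [apply lt_0_INR; lia | apply le_INR, Hab]|].
  rewrite mult_INR, pow_INR, ln_mult, ln_pow, plus_INR by (auto; apply pow_lt; auto).
  set (t := ln (INR b) / INR M).
  assert (Ht : 0 <= t) by (apply Rmult_le_pos; auto; apply Rlt_le, Rinv_0_lt_compat; auto).
  replace (ln (INR b)) with (t * INR M) by (unfold t; field; lra).
  replace (INR 2) with 2 by (simpl; lra). nra.
Qed.

Local Open Scope nat_scope.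

Lemma card_is_le_length {A} (P : A -> Prop) a l :
  card_is P a -> (forall x, P x -> In x l) -> a <= length l.
Proof. intros [L [ND [<- HL]]] Hl. apply NoDup_incl_length; auto. intros x Hx. apply Hl, HL, Hx. Qed.

Lemma card_is_le {A} (P Q : A -> Prop) a b :
  card_is P a -> card_is Q b -> (forall x, P x -> Q x) -> a <= b.
Proof. intros HP [L [_ [<- HL]]] HPQ. apply (card_is_le_length _ _ _ HP). intros x Hx. apply HL, HPQ, Hx. Qed.

Lemma card_is_ge1 {A} (P : A -> Prop) a x : P x -> card_is P a -> 1 <= a.
Proof. intros Px [L [_ [<- HL]]]. apply HL in Px. destruct L; simpl in *; [contradiction | lia]. Qed.

Lemma card_is_ex {A} (P : A -> Prop) l : (forall x, P x -> In x l) -> exists a, card_is P a.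
Proof.
  intros Hl.
  set (inP := fun x => if excluded_middle_informative (P x) then true else false).
  set (L := filter inP (nodup (fun x y => excluded_middle_informative (x = y)) l)).
  exists (length L), L. split; [|split; [reflexivity|]].
  - apply NoDup_filter, NoDup_nodup.
  - intro x. unfold L, inP. rewrite filter_In, nodup_In.
    destruct (excluded_middle_informative (P x)); split; intuition; discriminate.
Qed.

Lemma card_is_sub_ex {A} (P Q : A -> Prop) b :
  card_is Q b -> (forall x, P x -> Q x) -> exists a, card_is P a.
Proof. intros [L [_ [_ HL]]] HPQ. apply (card_is_ex _ L). intros x Hx. apply HL, HPQ, Hx. Qed.

Lemma NoDup_length_le_rel {A B} (R : A -> B -> Prop) (La : list A) (Lb : list B) :
  NoDup La -> (forall a, In a La -> exists b, In b Lb /\ R a b) ->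
  (forall a a' b, R a b -> R a' b -> a = a') -> length La <= length Lb.
Proof.
  intros ND Hex Huniq.
  set (back := fun b => match excluded_middle_informative (exists a, R a b) with
    | left H => Some (proj1_sig (constructive_indefinite_description _ H)) | right _ => None end).
  rewrite <- (length_map Some La), <- (length_map back Lb).
  apply NoDup_incl_length.
  - apply NoDup_map_NoDup_ForallPairs; [intros x y _ _ E; now injection E | exact ND].
  - intros o Ho. apply in_map_iff in Ho as [a [<- Ha]]. destruct (Hex a Ha) as [b [Hb Rab]].
    apply in_map_iff. exists b. split; auto. unfold back.
    destruct (excluded_middle_informative _) as [H | H]; [|exfalso; eauto].
    destruct (constructive_indefinite_description _ H) as [a' Ra'b]; simpl. f_equal. eauto.
Qed.

Lemma list_choice {A B} (R : A -> B -> Prop) (l : list A) :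
  (forall a, In a l -> exists b, R a b) ->
  exists l', length l' = length l /\ forall a, In a l -> exists b, In b l' /\ R a b.
Proof.
  induction l as [|a l IH]; intros Hex.
  - exists []. split; [reflexivity | intros _ []].
  - destruct IH as [l' [Hlen Hl']]; [intros; apply Hex; now right|].
    destruct (Hex a (or_introl eq_refl)) as [b Rab]. exists (b :: l'). split; [simpl; auto|].
    intros a' [<- | Ha']; [exists b; simpl; auto|]. destruct (Hl' a' Ha') as [b' [? ?]]. exists b'; simpl; auto.
Qed.

Lemma list_uniform_bound {A} (Q : A -> nat -> Prop) (l : list A) :
  (forall a K K', K <= K' -> Q a K -> Q a K') -> (forall a, In a l -> exists K, Q a K) ->
  exists K, forall a, In a l -> Q a K.
Proof.
  intros Hmono. induction l as [|b l IH]; intros Hex.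
  - exists 0. intros a [].
  - destruct IH as [K1 HK1]; [intros; apply Hex; now right|].
    destruct (Hex b (or_introl eq_refl)) as [K2 HK2]. exists (K1 + K2).
    intros a [<- | Ha]; [apply (Hmono _ K2) | apply (Hmono _ K1)]; auto; lia.
Qed.

Lemma dependent_choice_list {A} (G : list A -> Prop) :
  G [] -> (forall w, G w -> exists a, G (w ++ [a])) ->
  exists s : nat -> A, forall n, G (map s (seq 0 n)).
Proof.
  intros G0 Gstep.
  assert (step : forall w : {w | G w}, {a | G (proj1_sig w ++ [a])}).
  { intros [w Hw]. apply constructive_indefinite_description, Gstep, Hw. }
  set (next := fun w => exist G (proj1_sig w ++ [proj1_sig (step w)]) (proj2_sig (step w))).
  set (prefix := fun n => Nat.iter n next (exist G [] G0)).
  exists (fun i => proj1_sig (step (prefix i))). intro n.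
  enough (E : map (fun i => proj1_sig (step (prefix i))) (seq 0 n) = proj1_sig (prefix n))
    by (rewrite E; apply proj2_sig).
  induction n as [|n IH]; [reflexivity|]. rewrite seq_S, map_app, IH. reflexivity.
Qed.

Fixpoint tuples {A} (e : nat) (l : list A) : list (list A) :=
  match e with 0 => [[]] | S e' => flat_map (fun x => map (cons x) (tuples e' l)) l end.

Lemma tuples_length {A} e (l : list A) : length (tuples e l) = length l ^ e.
Proof.
  induction e as [|e IH]; simpl; auto. rewrite <- IH. clear IH. generalize (tuples e l) as T. intro T.
  induction l as [|x l IHl]; simpl; auto. rewrite length_app, length_map, IHl. lia.
Qed.

Lemma In_tuples {A} e (l : list A) b : length b = e -> (forall x, In x b -> In x l) -> In b (tuples e l).
Proof.
  revert b; induction e as [|e IH]; intros [|x b] Hb Hl; simpl in *; try lia; auto.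
  apply in_flat_map. exists x. split; auto. apply in_map, IH; auto.
Qed.

Definition agree {X} (n : nat) (u v : nat -> X) : Prop := forall i, i < n -> u i = v i.

Definition orbit {X} (f : nat -> X) (k : nat) : nat -> X := fun j => f (k + j).

Definition window {X} (f : nat -> X) (k n : nat) : list X := map (orbit f k) (seq 0 n).

Definition factor {X} (f : nat -> X) (n : nat) (w : list X) : Prop := exists k, w = window f k n.

Lemma agree_le {X} n n' (u v : nat -> X) : n <= n' -> agree n' u v -> agree n u v.
Proof. intros Hn H i Hi. apply H. lia. Qed.

Lemma map_seq_eq_iff {X} n (u v : nat -> X) : map u (seq 0 n) = map v (seq 0 n) <-> agree n u v.
Proof.
  rewrite map_ext_in_iff.
  split; intros H i Hi; [apply H, in_seq; lia | apply in_seq in Hi; apply H; lia].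
Qed.

Lemma window_length {X} (f : nat -> X) k n : length (window f k n) = n.
Proof. unfold window. rewrite length_map, length_seq. reflexivity. Qed.

Lemma window_cons {X} (f : nat -> X) k n : window f k (S n) = f k :: window f (S k) n.
Proof.
  unfold window, orbit. simpl. rewrite <- seq_shift, map_map. f_equal; [f_equal; lia|].
  apply map_ext. intro. f_equal. lia.
Qed.

Lemma window_snoc {X} (f : nat -> X) k n : window f k (S n) = window f k n ++ [f (k + n)].
Proof. unfold window. rewrite seq_S, map_app. reflexivity. Qed.

Lemma window_add {X} (f : nat -> X) k a b : window f k (a + b) = window f k a ++ window f (k + a) b.
Proof.
  revert k; induction a as [|a IH]; intros k; [now rewrite Nat.add_0_r|].
  change (S a + b) with (S (a + b)). rewrite !window_cons, IH, <- plus_n_Sm. reflexivity.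
Qed.

Lemma skipn_window {X} (f : nat -> X) k n r : skipn r (window f k n) = window f (k + r) (n - r).
Proof.
  revert k n; induction r as [|r IH]; intros k n; [now rewrite Nat.add_0_r, Nat.sub_0_r|].
  destruct n as [|n]; [reflexivity|]. rewrite window_cons. simpl. rewrite IH, <- plus_n_Sm. reflexivity.
Qed.

Lemma firstn_window {X} (f : nat -> X) k n m : m <= n -> firstn m (window f k n) = window f k m.
Proof.
  intros Hm. replace n with (m + (n - m)) by lia.
  rewrite window_add, firstn_app, window_length, Nat.sub_diag. cbn [firstn]. rewrite app_nil_r.
  apply firstn_all2. rewrite window_length. lia.
Qed.

Lemma concat_block_windows {X} (f : nat -> X) M q e :
  concat (map (fun j => window f (j * M) M) (seq q e)) = window f (q * M) (e * M).
Proof.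
  revert q; induction e as [|e IH]; intros q; [reflexivity|].
  cbn [seq map concat]. rewrite IH. change (S e * M) with (M + e * M). rewrite window_add.
  replace (S q * M) with (q * M + M) by lia. reflexivity.
Qed.

Lemma factor_card_ex {X} (f : nat -> X) (F : list X) n :
  (forall k, In (f k) F) -> exists a, card_is (factor f n) a.
Proof.
  intros HF. apply (card_is_ex _ (tuples n F)). intros w [k ->].
  apply In_tuples; [apply window_length|]. intros x Hx. unfold window, orbit in Hx.
  apply in_map_iff in Hx as [i [<- _]]. apply HF.
Qed.

Lemma Rm_factor {X} (f : nat -> X) m s : Rm f m s -> factor f m s.
Proof. intros [l ->]. exists (l * m). reflexivity. Qed.

(* A word of length n starting at k = q M + r is read off the e = n / M + 2 aligned blocks
   starting with block q, after dropping r letters. *)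
Lemma factor_card_le_blocks {X} (f : nat -> X) M n a b :
  1 <= M -> card_is (factor f n) a -> card_is (Rm f M) b -> a <= M * b ^ (n / M + 2).
Proof.
  intros HM Ha [RL [_ [<- HRL]]].
  set (e := n / M + 2).
  set (read := fun p : nat * list (list X) => firstn n (skipn (fst p) (concat (snd p)))).
  eapply Nat.le_trans.
  - apply (card_is_le_length _ _ (map read (list_prod (seq 0 M) (tuples e RL))) Ha).
    intros w [k ->]. apply in_map_iff.
    pose proof (Nat.div_mod k M ltac:(lia)). pose proof (Nat.mod_upper_bound k M ltac:(lia)).
    exists (k mod M, map (fun j => window f (j * M) M) (seq (k / M) e)). split.
    + unfold read. simpl. rewrite concat_block_windows, skipn_window, firstn_window.
      * f_equal. lia.
      * pose proof (Nat.div_mod n M ltac:(lia)). pose proof (Nat.mod_upper_bound n M ltac:(lia)).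
        unfold e. nia.
    + apply in_prod; [apply in_seq; lia|]. apply In_tuples; [now rewrite length_map, length_seq|].
      intros x Hx. apply in_map_iff in Hx as [j [<- _]]. apply HRL. now exists j.
  - rewrite length_map, length_prod, length_seq, tuples_length. lia.
Qed.

Lemma iter_shift {X} i (y : nat -> X) j : Nat.iter i shift y j = y (i + j).
Proof. revert j; induction i as [|i IH]; intros j; simpl; auto. unfold shift. rewrite IH. f_equal. lia. Qed.

Lemma orbit_in_Xf {X} (tX : topology X) (f : nat -> X) k : Xf tX f (orbit f k).
Proof. intros W _ HW. now exists k. Qed.

Lemma agree_orbits_Xf {X} (tX : topology X) (f : nat -> X) w :
  (forall n, exists k, agree n w (orbit f k)) -> Xf tX f w.
Proof.
  intros Hw W HW Ww. destruct (HW w Ww) as [n [Us [_ [HUs Hcyl]]]]. destruct (Hw n) as [k Hk].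
  exists k. apply Hcyl. intros i Hi. change (Us i (orbit f k i)). rewrite <- Hk; auto.
Qed.

Lemma hausdorff_isolating {X} (tX : topology X) (F : list X) : hausdorff tX ->
  exists iso : X -> X -> Prop, (forall x, is_open tX (iso x)) /\ (forall x, iso x x) /\
    (forall x a, In a F -> iso x a -> a = x).
Proof.
  intros HH.
  assert (Hsep : forall x, exists U, is_open tX U /\ U x /\ forall a, In a F -> U a -> a = x).
  { intro x. induction F as [|b F IH].
    - exists (fun _ => True). split; [apply open_full | split; [exact I | intros a []]].
    - destruct IH as [U [HU [Ux HUF]]]. destruct (classic (b = x)) as [<- | Hb].
      + exists U. split; [|split]; auto. intros a [<- | Ha] HUa; auto.
      + destruct (HH x b (fun e => Hb (eq_sym e))) as [V [W [HV [HW [Vx [Wb HVW]]]]]].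
        exists (fun z => U z /\ V z). split; [apply open_inter; auto | split; auto].
        intros a [<- | Ha] [HUa HVa]; [exfalso; apply (HVW b); auto | auto]. }
  destruct (choice _ Hsep) as [iso Hiso]. exists iso.
  split; [|split]; intro x; apply Hiso.
Qed.

Section Subshift.

Variables (X : Type) (tX : topology X) (f : nat -> X) (F : list X).
Hypothesis f_in_F : forall n, In (f n) F.

(* Koenig's lemma: if no window length K works, the words w that can be extended to a bad
   window for every K can be prolonged forever, and the resulting point of X_f lies in no
   member of C. *)
Lemma cover_window_length (C : ((nat -> X) -> Prop) -> Prop) :
  (forall U, C U -> prod_open tX U) -> (forall y, Xf tX f y -> exists U, C U /\ U y) ->
  exists K, forall pos, exists V, C V /\ forall v, agree K v (orbit f pos) -> V v.
Proof.
  intros Copen Ccov. apply NNPP. intros Hno.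
  set (Bad := fun w : list X => forall K, exists pos, window f pos (length w) = w /\
    ~ exists V, C V /\ forall v, agree K v (orbit f pos) -> V v).
  assert (Bad_nil : Bad []).
  { intros K. apply NNPP. intros H. apply Hno. exists K. intros pos. apply NNPP. intros Hpos.
    apply H. now exists pos. }
  assert (Bad_snoc : forall w, Bad w -> exists a, Bad (w ++ [a])).
  { intros w Hw. apply NNPP. intros Hnone.
    destruct (list_uniform_bound (fun a K => forall pos, window f pos (S (length w)) = w ++ [a] ->
        exists V, C V /\ forall v, agree K v (orbit f pos) -> V v) F) as [K HK].
    - intros a K K' HKK' HaK pos Hpos. destruct (HaK pos Hpos) as [V [CV HV]].
      exists V. split; auto. intros v Hv. apply HV, (agree_le _ K'); auto.
    - intros a _. apply NNPP. intros Ha. apply Hnone. exists a. intros K. apply NNPP. intros HK.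
      apply Ha. exists K. intros pos Hpos. apply NNPP. intros Hc. apply HK. exists pos.
      rewrite length_app, Nat.add_comm. auto.
    - destruct (Hw K) as [pos [Hpos Hbad]]. apply Hbad, (HK (f (pos + length w)) (f_in_F _)).
      now rewrite window_snoc, Hpos. }
  destruct (dependent_choice_list Bad Bad_nil Bad_snoc) as [s Hs].
  assert (Hs_window : forall n, exists pos, agree n s (orbit f pos) /\
    ~ exists V, C V /\ forall v, agree n v (orbit f pos) -> V v).
  { intros n. destruct (Hs n n) as [pos [Hpos Hbad]]. rewrite length_map, length_seq in Hpos.
    exists pos. split; auto. intros i Hi. symmetry. now apply (map_seq_eq_iff n (orbit f pos) s). }
  destruct (Ccov s) as [U [CU Us]].
  { apply agree_orbits_Xf. intros n. destruct (Hs_window n) as [pos [Hpos _]]. now exists pos. }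
  destruct (Copen U CU s Us) as [n [Us' [_ [Hs' Hcyl]]]].
  destruct (Hs_window n) as [pos [Hpos Hbad]]. apply Hbad. exists U. split; auto.
  intros v Hv. apply Hcyl. intros i Hi. rewrite Hv, <- Hpos; auto.
Qed.

Variable iso : X -> X -> Prop.
Hypothesis iso_open : forall x, is_open tX (iso x).
Hypothesis iso_self : forall x, iso x x.
Hypothesis iso_sep : forall x a, In a F -> iso x a -> a = x.

Lemma Xf_agree_orbits w : Xf tX f w -> forall n, exists k, agree n w (orbit f k).
Proof.
  intros Hw n. destruct (Hw (fun v => forall i, i < n -> iso (w i) (v i))) as [k Hk].
  - intros v Hv. exists n, (fun i => iso (w i)). auto.
  - intros i _. apply iso_self.
  - exists k. intros i Hi. symmetry. apply iso_sep; [apply f_in_F | auto].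
Qed.

Lemma factor_subcover (B : nat -> (nat -> X) -> Prop) L c :
  (forall q y, agree L y (orbit f q) -> B q y) -> card_is (factor f L) c ->
  exists Vs, length Vs = c /\ (forall V, In V Vs -> exists q, V = B q) /\
    forall y, Xf tX f y -> exists V, In V Vs /\ V y.
Proof.
  intros HB [Lw [_ [<- HLw]]].
  destruct (list_choice (fun w q => w = window f q L) Lw) as [Pl [HPl HPw]].
  { intros w Hw. now apply HLw in Hw. }
  exists (map B Pl). split; [now rewrite length_map|]. split.
  - intros V HV. apply in_map_iff in HV as [q [<- _]]. now exists q.
  - intros y Hy. destruct (Xf_agree_orbits y Hy L) as [k Hk].
    destruct (HPw (window f k L)) as [q [Hq Hkq]]; [apply HLw; now exists k|].
    exists (B q). split; [now apply in_map|]. apply HB. intros i Hi.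
    rewrite (Hk i Hi). now apply (map_seq_eq_iff L (orbit f k) (orbit f q)).
Qed.

Lemma min_subcover_le_factors (D : ((nat -> X) -> Prop) -> Prop) (B : nat -> (nat -> X) -> Prop) L c N :
  (forall q, D (B q)) -> (forall q y, agree L y (orbit f q) -> B q y) ->
  card_is (factor f L) c -> min_subcover_card (Xf tX f) D N -> N <= c.
Proof.
  intros HD HB Hc [_ Hmin]. destruct (factor_subcover B L c HB Hc) as [Vs [<- [HVs Hcov]]].
  apply Hmin; auto. intros V HV. destruct (HVs V HV) as [q ->]. apply HD.
Qed.

(* On X_f these are the cylinders {v | v 0 = a}: [iso a] meets the range of f only at [a]. *)
Definition letter_cover : ((nat -> X) -> Prop) -> Prop :=
  fun V => exists a, In a F /\ V = (fun v => iso a (v 0)).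

Definition letter_block (n q : nat) (y : nat -> X) : Prop := forall i, i < n -> iso (f (q + i)) (y i).

Lemma letter_cover_open_cover : open_cover (prod_open tX) (Xf tX f) letter_cover.
Proof.
  split.
  - intros U [a [_ ->]] w Hw. exists 1, (fun _ => iso a). split; [auto | split].
    + intros i Hi. now replace i with 0 by lia.
    + intros v Hv. apply Hv. lia.
  - intros y Hy. destruct (Xf_agree_orbits y Hy 1) as [k Hk].
    exists (fun v => iso (y 0) (v 0)). split; [|apply iso_self].
    exists (y 0). split; auto. rewrite (Hk 0); [apply f_in_F | lia].
Qed.

Lemma letter_block_join n q : join_n letter_cover shift n (letter_block n q).
Proof.
  exists (fun i v => iso (f (q + i)) (v 0)). split.
  - intros i _. now exists (f (q + i)).
  - intros y. unfold letter_block. split; intros H i Hi; specialize (H i Hi);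
      rewrite iter_shift, Nat.add_0_r in *; auto.
Qed.

Lemma letter_join_window n V k k' : join_n letter_cover shift n V ->
  V (orbit f k) -> V (orbit f k') -> window f k n = window f k' n.
Proof.
  intros [Us [HUs HV]] Hk Hk'. apply map_seq_eq_iff. intros i Hi.
  pose proof (proj1 (HV _) Hk i Hi) as Hki. pose proof (proj1 (HV _) Hk' i Hi) as Hk'i.
  destruct (HUs i Hi) as [a [Ha HUa]]. rewrite HUa, iter_shift, Nat.add_0_r in Hki, Hk'i.
  transitivity a; [|symmetry]; apply iso_sep; auto; apply f_in_F.
Qed.

Lemma letter_cover_join_card n c :
  card_is (factor f n) c -> min_subcover_card (Xf tX f) (join_n letter_cover shift n) c.
Proof.
  intros Hc. split.
  - destruct (factor_subcover (letter_block n) n c) as [Vs [HVs [Hblock Hcov]]]; auto.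
    + intros q y Hy i Hi. rewrite (Hy i Hi). apply iso_self.
    + exists Vs. split; [|split]; auto. intros V HV. destruct (Hblock V HV) as [q ->]. apply letter_block_join.
  - intros L HD Hcov. destruct Hc as [Lw [ND [<- HLw]]].
    apply (NoDup_length_le_rel (fun w V => In V L /\ exists k, w = window f k n /\ V (orbit f k)) Lw L ND).
    + intros w Hw. apply HLw in Hw as [k ->]. destruct (Hcov _ (orbit_in_Xf tX f k)) as [V [HV Vk]].
      exists V. split; [|split]; eauto.
    + intros w w' V [HV [k [-> Hk]]] [_ [k' [-> Hk']]]. apply (letter_join_window n V); auto.
Qed.

Lemma join_card_le_factors (C : ((nat -> X) -> Prop) -> Prop) K n N c :
  (forall pos, exists V, C V /\ forall v, agree K v (orbit f pos) -> V v) ->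
  card_is (factor f (n + K)) c -> min_subcover_card (Xf tX f) (join_n C shift n) N -> N <= c.
Proof.
  intros HK. destruct (choice _ HK) as [Uc HUc].
  apply (min_subcover_le_factors _ (fun q y => forall i, i < n -> Uc (q + i) (Nat.iter i shift y))).
  - intros q. exists (fun i => Uc (q + i)). split; [intros i _; apply HUc | tauto].
  - intros q y Hy i Hi. apply HUc. intros j Hj. rewrite iter_shift, Hy by lia.
    unfold orbit. f_equal. lia.
Qed.

Lemma min_subcover_card_ge1 D N : min_subcover_card (Xf tX f) D N -> 1 <= N.
Proof.
  intros [[L [<- [_ Hcov]]] _]. destruct (Hcov _ (orbit_in_Xf tX f 0)) as [V [HV _]].
  destruct L; simpl in *; [contradiction | lia].
Qed.

Local Open Scope R_scope.

Lemma anqie_entropy_of_factor_growth (ell : nat -> nat) h :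
  (forall n, card_is (factor f n) (ell n)) ->
  Un_cv (fun n => ln (INR (ell (S n))) / INR (S n)) h -> anqie_entropy tX f h.
Proof.
  intros Hell Hcv. split.
  - intros x [C [[Copen Ccov] [N [HN Hx]]]].
    destruct (cover_window_length C Copen Ccov) as [K HK].
    refine (Rle_cv_lim _ Hx (Un_cv_shift_rescale (fun k => ln (INR (ell k))) h K Hcv)).
    intro n. unfold Rdiv. apply Rmult_le_compat_r; [apply Rlt_le, Rinv_0_lt_compat, lt_0_INR; lia|].
    apply ln_le_compat.
    + apply lt_0_INR. apply (min_subcover_card_ge1 _ _ (HN (S n))).
    + apply le_INR, (join_card_le_factors C K (S n)); auto.
  - intros b Hb. apply Hb. exists letter_cover. split; [apply letter_cover_open_cover|].
    exists ell. split; auto. intro n. apply letter_cover_join_card, Hell.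
Qed.

End Subshift.

Local Open Scope R_scope.

Lemma factor_complexity_limit {X} (f : nat -> X) (ell rho : nat -> nat) :
  (forall n, card_is (factor f n) (ell n)) -> (forall m, card_is (Rm f (S m)) (rho m)) ->
  exists h, Un_cv (fun n => ln (INR (ell (S n))) / INR (S n)) h /\
            Un_cv (fun m => ln (INR (rho m)) / INR (S m)) h.
Proof.
  intros Hell Hrho.
  assert (ell_ge1 : forall n, (1 <= ell n)%nat).
  { intro n. exact (card_is_ge1 _ _ _ (ex_intro _ 0%nat eq_refl) (Hell n)). }
  assert (rho_ge1 : forall m, (1 <= rho m)%nat).
  { intro m. exact (card_is_ge1 _ _ _ (ex_intro _ 0%nat eq_refl) (Hrho m)). }
  assert (rho_le_ell : forall m, (rho m <= ell (S m))%nat).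
  { intro m. apply (card_is_le _ _ _ _ (Hrho m) (Hell (S m)) (Rm_factor f (S m))). }
  assert (Spos : forall n, 0 < INR (S n)) by (intro; apply lt_0_INR; lia).
  apply cv_inf_of_upper_bounds.
  - intro m. apply Rmult_le_pos; [apply ln_INR_ge0; auto | apply Rlt_le, Rinv_0_lt_compat; auto].
  - intro n. unfold Rdiv. apply Rmult_le_compat_r; [apply Rlt_le, Rinv_0_lt_compat; auto|].
    apply ln_le_compat; [apply lt_0_INR, rho_ge1 | apply le_INR, rho_le_ell].
  - intro m. exists (ln (INR (S m)) + 2 * ln (INR (rho m))). intro n.
    apply div_le_add_div; auto. apply ln_block_bound; auto; [lia|].
    apply (factor_card_le_blocks f); auto. lia.
Qed.

Theorem lemma6p2 (X : Type) (tX : topology X) (HH : hausdorff tX) (HC : compact_sp tX)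
  (f : nat -> X) (Hfin : exists L : list X, forall n, In (f n) L) :
  exists h : R, anqie_entropy tX f h /\
    exists r : nat -> nat, (forall m, card_is (Rm f (S m)) (r m)) /\
      Un_cv (fun m => ln (INR (r m)) / INR (S m)) h.
Proof.
  destruct Hfin as [F HF].
  destruct (hausdorff_isolating tX F HH) as [iso [iso_open [iso_self iso_sep]]].
  destruct (choice (fun n a => card_is (factor f n) a)) as [ell Hell].
  { intro n. apply (factor_card_ex f F n HF). }
  destruct (choice (fun m a => card_is (Rm f (S m)) a)) as [rho Hrho].
  { intro m. apply (card_is_sub_ex _ _ _ (Hell (S m)) (Rm_factor f (S m))). }
  destruct (factor_complexity_limit f ell rho Hell Hrho) as [h [Hell_cv Hrho_cv]].
  exists h. split.
  - eapply anqie_entropy_of_factor_growth; eauto.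
  - exists rho. auto.
Qed.
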